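(* For every graph $G$ and every positive integer $k$, $\gamma_k(G)\le \chi_{\mu_k}(G)$.
   Context: All graphs are finite, simple and undirected. $d_G(u,v)$ denotes the distance in $G$; a $u,v$-geodesic is a shortest $u,v$-path. For a positive integer $k$, a set $M\subseteq V(G)$ is a $k$-distance mutual-visibility set if for every two vertices $u,v\in M$ there exists a $u,v$-geodesic of length at most $k$ none of whose internal vertices lies in $M$. The $k$-distance mutual-visibility chromatic number $\chi_{\mu_k}(G)$ is the minimum cardinality of a partition of $V(G)$ into $k$-distance mutual-visibility sets. A set $D\subseteq V(G)$ is a distance $k$-dominating set if every vertex of $V(G)\setminus D$ is at distance at most $k$ from some vertex of $D$; $\gamma_k(G)$ is the minimum cardinality of such a set. *)

(* A finite simple graph on vertex type T is a symmetric,
   irreflexive boolean relation e : rel T. *)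
From mathcomp Require Import all_boot.
Set Implicit Arguments. Unset Strict Implicit. Unset Printing Implicit Defensive.

Section Graphs.
Variables (T : finType) (e : rel T).

(* A u,v-walk is a sequence p with path e u p and last u p = v;
   its length is size p (number of edges). *)
Definition walk (u v : T) (p : seq T) : Prop := path e u p /\ last u p = v.

Definition dist_le (k : nat) (u v : T) : Prop :=
  exists p, walk u v p /\ size p <= k.

Definition geodesic (u v : T) (p : seq T) : Prop :=
  walk u v p /\ forall q, walk u v q -> size p <= size q.

(* Internal vertices of the walk u :: p (all vertices except u and last u p). *)
Definition internal (u : T) (p : seq T) : seq T := behead (belast u p).

Definition kdmv_set (k : nat) (M : {set T}) : Prop :=
  forall u v, u \in M -> v \in M ->
    exists p, geodesic u v p /\ size p <= k /\ all (fun x => x \notin M) (internal u p).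

Definition dist_k_dominating (k : nat) (D : {set T}) : Prop :=
  forall x, x \notin D -> exists y, y \in D /\ dist_le k y x.

Definition is_min_card (U : finType) (P : {set U} -> Prop) (n : nat) : Prop :=
  (exists X, P X /\ #|X| = n) /\ (forall X, P X -> n <= #|X|).

Definition is_gamma_k (k n : nat) : Prop := is_min_card (dist_k_dominating k) n.

Definition is_chi_mu_k (k n : nat) : Prop :=
  is_min_card (fun P : {set {set T}} =>
                 partition P [set: T] /\ forall M, M \in P -> kdmv_set k M) n.
End Graphs.

(* Pick one vertex in each class of an optimal partition into k-distance
   mutual-visibility sets.  Any two vertices of such a class are joined by a
   geodesic of length at most k, so every vertex lies within distance k of the
   representative of its own class: the representatives form a distance
   k-dominating set of size chi_{mu_k}(G). *)
From mathcomp Require Import all_boot.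

Set Implicit Arguments.
Unset Strict Implicit.
Unset Printing Implicit Defensive.

Section Domination.
Variables (T : finType) (e : rel T).

Lemma kdmv_set_dist_le k (M : {set T}) u v :
  kdmv_set e k M -> u \in M -> v \in M -> dist_le e k u v.
Proof.
move=> visM uM vM; have [p [[walk_p _] [size_p _]]] := visM u v uM vM.
by exists p.
Qed.

Lemma transversal_dist_k_dominating k (P : {set {set T}}) (X : {set T}) :
  (forall M, M \in P -> kdmv_set e k M) ->
  is_transversal X P [set: T] -> dist_k_dominating e k X.
Proof.
move=> visP trX x _.
have partP : partition P [set: T] by case/and3P: trX.
have PBx : pblock P x \in P by rewrite pblock_mem ?(cover_partition partP).
have xBx : x \in pblock P x by rewrite mem_pblock (cover_partition partP).
exists (transversal_repr x X (pblock P x)); split.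
  exact: repr_mem_transversal trX _ _ PBx.
exact: kdmv_set_dist_le (visP _ PBx) (repr_mem_pblock trX _ PBx) xBx.
Qed.

End Domination.

Theorem proposition2p3 (T : finType) (e : rel T)
  (e_sym : symmetric e) (e_irr : irreflexive e)
  (k : nat) (k_pos : 0 < k) (g c : nat) :
  is_gamma_k e k g -> is_chi_mu_k e k c -> g <= c.
Proof.
move=> [_ gamma_min] [[P [[partP visP] <-]] _].
have trP := transversalP partP.
rewrite -(card_transversal trP).
exact: gamma_min (transversal_dist_k_dominating visP trP).
Qed.
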